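(* The area of the cusp triangle $T'=P_1'P_2'P_3'$ equals $\dfrac{27\sqrt3}{16}\,\dfrac{c^4}{ab}$, independent of $u$.
   Context: Let $a>b>0$ and $c>0$ with $c^2=a^2-b^2$. Let $\mathcal{E}$ be the ellipse $x^2/a^2+y^2/b^2=1$, parametrized by $P(t)=(a\cos t,b\sin t)$. Fix $u\in\mathbb{R}$ and let $M=(a\cos u,b\sin u)$. Let $\Delta_u(t)=(x_u(t),y_u(t))$, where $x_u(t)=\frac1a\big(c^2(1+\cos(t+u))\cos t-a^2\cos u\big)$ and $y_u(t)=\frac1b\big(c^2\cos t\sin(t+u)-c^2\sin t-a^2\sin u\big)$ (the negative pedal curve of $\mathcal{E}$ with respect to $M$). For $i=1,2,3$ let $t_i=-u/3-2\pi(i-1)/3$ and $P_i'=\Delta_u(t_i)$ (the cusps of $\Delta_u$). *)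

From Stdlib Require Import Reals Lra.
Open Scope R_scope.

(* Negative pedal curve Delta_u(t) of the ellipse x^2/a^2+y^2/b^2=1 w.r.t.
   M = (a cos u, b sin u), with c^2 = a^2 - b^2. *)
Definition delta_x (a c u t : R) : R :=
  / a * (c ^ 2 * (1 + cos (t + u)) * cos t - a ^ 2 * cos u).
Definition delta_y (a b c u t : R) : R :=
  / b * (c ^ 2 * cos t * sin (t + u) - c ^ 2 * sin t - a ^ 2 * sin u).

Definition cusp_t (u : R) (i : nat) : R :=
  - u / 3 - 2 * PI * (INR i - 1) / 3.

Definition triangle_area (x1 y1 x2 y2 x3 y3 : R) : R :=
  Rabs ((x2 - x1) * (y3 - y1) - (x3 - x1) * (y2 - y1)) / 2.

From Stdlib Require Import Reals.
From Stdlib Require Import Lra.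
Open Scope R_scope.

(* At a cusp parameter t, i.e. when 3t + u is a multiple of 2π, the
   trigonometric products in Δ_u(t) collapse (cusp_identities), so that
     Δ_u(t) = (3c²/(2a) cos t, -3c²/(2b) sin t) + (a point depending on u only)
   (delta_at_cusp).  Hence the cusp triangle is the image, under a diagonal
   linear map followed by a translation, of the triangle inscribed in the unit
   circle with vertices at the angles t_1, t_2, t_3.  A diagonal map
   diag(α, β) multiplies areas by |αβ| and translations preserve them
   (triangle_area_affine); the inscribed triangle has area
   |sin(B-A) + sin(C-B) + sin(A-C)|/2 (inscribed_triangle_area), which for
   angles spaced by 2π/3 is 3√3/4 (equilateral_inscribed_area).  Multiplying,
   (9c⁴/(4ab)) · 3√3/4 = 27√3 c⁴/(16ab), independently of u; only a, b ≠ 0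
   is used, not the relation c² = a² - b². *)

(* If 3θ + u ≡ 0 (mod 2π) then 2θ + u ≡ -θ, which turns the products of
   trigonometric functions in Δ_u(θ) into linear expressions. *)
Lemma cusp_identities (th u : R) (n : nat) :
  3 * th + u = - (2 * INR n * PI) ->
  (1 + cos (th + u)) * cos th = 3 / 2 * cos th + cos u / 2 /\
  cos th * sin (th + u) - sin th = - (3 / 2) * sin th + sin u / 2.
Proof.
  intro Hcusp.
  set (A := 2 * th + u).
  assert (HA : - th = A + 2 * INR n * PI) by (unfold A; lra).
  assert (cosA : cos A = cos th).
  { rewrite <- (cos_period A n), <- HA, cos_neg; reflexivity. }
  assert (sinA : sin A = - sin th).
  { rewrite <- (sin_period A n), <- HA, sin_neg; reflexivity. }
  replace (th + u) with (A - th) by (unfold A; ring).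
  replace u with (A - (th + th)) by (unfold A; ring).
  rewrite !cos_minus, !sin_minus, cos_plus, sin_plus, cosA, sinA.
  pose proof (sin2_cos2 th) as Pyth; unfold Rsqr in Pyth.
  split.
  - replace (cos th * cos th) with (1 - sin th * sin th) by lra; field.
  - replace (sin th * sin th) with (1 - cos th * cos th) by lra; field.
Qed.

Lemma delta_at_cusp (a b c u t : R) (n : nat) :
  a <> 0 -> b <> 0 -> 3 * t + u = - (2 * INR n * PI) ->
  delta_x a c u t = 3 * c ^ 2 / (2 * a) * cos t + (c ^ 2 - 2 * a ^ 2) * cos u / (2 * a) /\
  delta_y a b c u t = - (3 * c ^ 2 / (2 * b)) * sin t + (c ^ 2 - 2 * a ^ 2) * sin u / (2 * b).
Proof.
  intros Ha Hb Hcusp.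
  destruct (cusp_identities t u n Hcusp) as [Ex Ey].
  unfold delta_x, delta_y.
  split.
  - rewrite Rmult_assoc, Ex; field; exact Ha.
  - replace (c ^ 2 * cos t * sin (t + u) - c ^ 2 * sin t)
      with (c ^ 2 * (cos t * sin (t + u) - sin t)) by ring.
    rewrite Ey; field; exact Hb.
Qed.

Lemma cusp_t_is_cusp (u : R) (n : nat) :
  3 * cusp_t u (S n) + u = - (2 * INR n * PI).
Proof. unfold cusp_t; rewrite S_INR; field. Qed.

Lemma triangle_area_affine (al be p q x1 y1 x2 y2 x3 y3 : R) :
  triangle_area (al * x1 + p) (be * y1 + q) (al * x2 + p) (be * y2 + q)
                (al * x3 + p) (be * y3 + q)
  = Rabs (al * be) * triangle_area x1 y1 x2 y2 x3 y3.
Proof.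
  unfold triangle_area.
  replace ((al * x2 + p - (al * x1 + p)) * (be * y3 + q - (be * y1 + q))
           - (al * x3 + p - (al * x1 + p)) * (be * y2 + q - (be * y1 + q)))
    with ((al * be) * ((x2 - x1) * (y3 - y1) - (x3 - x1) * (y2 - y1))) by ring.
  rewrite Rabs_mult; field.
Qed.

Lemma inscribed_triangle_area (A B C : R) :
  triangle_area (cos A) (sin A) (cos B) (sin B) (cos C) (sin C)
  = Rabs (sin (B - A) + sin (C - B) + sin (A - C)) / 2.
Proof.
  unfold triangle_area; rewrite !sin_minus.
  f_equal; f_equal; ring.
Qed.

Lemma equilateral_inscribed_area (A B C : R) :
  B - A = - (2 * (PI / 3)) -> C - B = - (2 * (PI / 3)) ->
  triangle_area (cos A) (sin A) (cos B) (sin B) (cos C) (sin C)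
  = 3 * sqrt 3 / 4.
Proof.
  intros HBA HCB.
  assert (HAC : A - C = 2 * (2 * (PI / 3))) by lra.
  rewrite inscribed_triangle_area, HBA, HCB, HAC, sin_neg, (sin_2a (2 * (PI / 3))),
    cos_2PI3, sin_2PI3.
  assert (Hr3 : 0 < sqrt 3) by (apply sqrt_lt_R0; lra).
  replace (- (sqrt 3 / 2) + - (sqrt 3 / 2) + 2 * (sqrt 3 / 2) * (-1 / 2))
    with (- (3 * sqrt 3 / 2)) by field.
  rewrite Rabs_Ropp, Rabs_right by lra.
  field.
Qed.

Theorem proposition4p1 (a b c u : R) :
  a > b -> b > 0 -> c > 0 -> c ^ 2 = a ^ 2 - b ^ 2 ->
  triangle_area
    (delta_x a c u (cusp_t u 1)) (delta_y a b c u (cusp_t u 1))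
    (delta_x a c u (cusp_t u 2)) (delta_y a b c u (cusp_t u 2))
    (delta_x a c u (cusp_t u 3)) (delta_y a b c u (cusp_t u 3))
  = 27 * sqrt 3 / 16 * (c ^ 4 / (a * b)).
Proof.
  intros Hab Hb Hc _.
  assert (Ha0 : a <> 0) by lra.
  assert (Hb0 : b <> 0) by lra.
  destruct (delta_at_cusp a b c u _ 0 Ha0 Hb0 (cusp_t_is_cusp u 0)) as [-> ->].
  destruct (delta_at_cusp a b c u _ 1 Ha0 Hb0 (cusp_t_is_cusp u 1)) as [-> ->].
  destruct (delta_at_cusp a b c u _ 2 Ha0 Hb0 (cusp_t_is_cusp u 2)) as [-> ->].
  rewrite triangle_area_affine, equilateral_inscribed_area
    by (unfold cusp_t; simpl; field).
  assert (Hscale : 0 < 3 * c ^ 2 / (2 * a) * (3 * c ^ 2 / (2 * b))).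
  { assert (0 < c ^ 2) by nra.
    apply Rmult_lt_0_compat; apply Rdiv_lt_0_compat; lra. }
  rewrite Ropp_mult_distr_r_reverse, Rabs_Ropp, Rabs_right by lra.
  field; lra.
Qed.
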